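(* Let $\rho^{\textrm{sep}}$ be a separable state on $\mathbb{C}^d\otimes\mathbb{C}^d$ such that $\operatorname{Tr}(P_\mathcal{A} \rho^{\textrm{sep}})>0$. Then there is a separable state $\rho'^{\textrm{sep}}$ such that $\operatorname{Tr}(P_\mathcal{A} \rho'^{\textrm{sep}})=1/2$ and $\frac{P_\mathcal{A} \rho^{\textrm{sep}} P_\mathcal{A}}{\operatorname{Tr}(P_\mathcal{A} \rho^{\textrm{sep}})}= \frac{P_\mathcal{A} \rho'^{\textrm{sep}} P_\mathcal{A}}{\operatorname{Tr}(P_\mathcal{A} \rho'^{\textrm{sep}})}$.
   Context: Two $d$-dimensional systems $A,B$ with $\mathcal{H}_{AB}=\mathbb{C}^d\otimes\mathbb{C}^d$. $V$ is the swap operator, $V\ket{\alpha}\ket{\beta}=\ket{\beta}\ket{\alpha}$. $P_\mathcal{A}=(\mathbb{1}-V)/2$ is the projector onto the antisymmetric subspace (with $\mathbb{1}$ the identity operator). A state is separable if it can be written as $\sum_k q_k |\alpha_k\rangle\langle\alpha_k|\otimes|\beta_k\rangle\langle\beta_k|$ with $q_k$ a probability distribution. *)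

From HB Require Import structures.
From mathcomp Require Import all_boot all_order all_algebra.
From mathcomp Require Import reals.
From mathcomp Require Import complex.
Set Implicit Arguments. Unset Strict Implicit. Unset Printing Implicit Defensive.
Import Order.TTheory GRing.Theory Num.Theory.
Local Open Scope ring_scope.

Section QInfo.
Variable R : realType.
Local Notation C := (R[i]).
Variable d : nat.

Definition adj m n (A : 'M[C]_(m, n)) : 'M[C]_(n, m) := (map_mx Num.conj A)^T.

Definition ketbra (a : 'cV[C]_d) : 'M[C]_d := a *m adj a.

Definition unit_vec (a : 'cV[C]_d) : Prop := (adj a *m a) 0 0 = 1.

(* Kronecker product on C^d (x) C^d; basis |i>|j> indexed by mxvec_index i j *)
Definition tens (A B : 'M[C]_d) : 'M[C]_(d * d) :=
  \sum_(i < d) \sum_(j < d) \sum_(k < d) \sum_(l < d)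
     (A i k * B j l) *: delta_mx (mxvec_index i j) (mxvec_index k l).

Definition swap_op : 'M[C]_(d * d) :=
  \sum_(i < d) \sum_(j < d) delta_mx (mxvec_index j i) (mxvec_index i j).

Definition PA : 'M[C]_(d * d) := 2^-1 *: (1%:M - swap_op).

Definition separable (rho : 'M[C]_(d * d)) : Prop :=
  exists (n : nat) (q : 'I_n -> C) (alpha beta : 'I_n -> 'cV[C]_d),
    [/\ forall k, 0 <= q k,
        \sum_k q k = 1,
        forall k, unit_vec (alpha k),
        forall k, unit_vec (beta k) &
        rho = \sum_k q k *: tens (ketbra (alpha k)) (ketbra (beta k))].
End QInfo.

(* Write rho = sum_k q_k |a_k b_k><a_k b_k|.  Since P_A annihilates |a>|a>,
   replacing b_k by its component w_k = b_k - <a_k|b_k> a_k orthogonal to a_k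
   leaves P_A |a_k b_k> unchanged.  Writing w_k = s_k g_k with g_k a unit
   vector and s_k = |w_k| >= 0, this gives
   P_A |a_k b_k><a_k b_k| P_A = s_k^2 P_A |a_k g_k><a_k g_k| P_A, and a product
   of orthogonal unit vectors satisfies Tr (P_A |a g><a g|) = 1/2.  Moreover
   s_k^2 = 1 - |<a_k|b_k>|^2 = 2 Tr (P_A |a_k b_k><a_k b_k|), so the mixture of
   the |a_k g_k><a_k g_k| with weights proportional to q_k s_k^2 is the
   required separable state rho'. *)

From mathcomp Require Import all_boot all_order all_algebra.
From mathcomp Require Import reals complex.
From mathcomp Require Import ring.
Import Order.TTheory GRing.Theory Num.Theory.
Local Open Scope ring_scope.
Set Implicit Arguments. Unset Strict Implicit.

Lemma sum_mxvec_index (V : nmodType) m n (F : 'I_(m * n) -> V) :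
  \sum_k F k = \sum_(i < m) \sum_(j < n) F (mxvec_index i j).
Proof. by rewrite (reindex _ (curry_mxvec_bij _ _)) pair_bigA; apply: eq_bigr => -[]. Qed.

Lemma mxvec_index_eq m n (i k : 'I_m) (j l : 'I_n) :
  (mxvec_index i j == mxvec_index k l) = (i == k) && (j == l).
Proof.
apply/eqP/andP => [|[/eqP-> /eqP->]//].
by rewrite /mxvec_index => /cast_ord_inj/enum_rank_inj [-> ->].
Qed.

Section LinearCombinations.
Variable K : comNzRingType.

Lemma mxtrace_mulmx_sum n m (P : 'M[K]_n) (x : 'I_m -> K) (M : 'I_m -> 'M[K]_n) :
  \tr (P *m \sum_k x k *: M k) = \sum_k x k * \tr (P *m M k).
Proof.
rewrite mulmx_sumr linear_sum; apply: eq_bigr => k _.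
by rewrite -scalemxAr linearZ.
Qed.

Lemma mulmx_sum_mulmx n m (P Q : 'M[K]_n) (x : 'I_m -> K) (M : 'I_m -> 'M[K]_n) :
  P *m (\sum_k x k *: M k) *m Q = \sum_k x k *: (P *m M k *m Q).
Proof.
rewrite mulmx_sumr mulmx_suml; apply: eq_bigr => k _.
by rewrite -scalemxAr -scalemxAl.
Qed.

End LinearCombinations.

Section Adjoint.
Variable R : realType.
Local Notation C := (R[i]).

Lemma adjmxD m n (A B : 'M[C]_(m, n)) : adj (A + B) = adj A + adj B.
Proof. by rewrite /adj map_mxD linearD. Qed.

Lemma adjmxN m n (A : 'M[C]_(m, n)) : adj (- A) = - adj A.
Proof. by rewrite /adj map_mxN linearN. Qed.

Lemma adjmxZ m n x (A : 'M[C]_(m, n)) : adj (x *: A) = x^* *: adj A.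
Proof. by rewrite /adj map_mxZ linearZ. Qed.

Lemma adjmx_sum m n I (r : seq I) (P : pred I) (F : I -> 'M[C]_(m, n)) :
  adj (\sum_(k <- r | P k) F k) = \sum_(k <- r | P k) adj (F k).
Proof.
apply: (big_morph _ (@adjmxD m n)).
by apply/matrixP => i j; rewrite !mxE rmorph0.
Qed.

Lemma adjmx_delta m n (i : 'I_m) (j : 'I_n) :
  adj (delta_mx i j : 'M[C]_(m, n)) = delta_mx j i.
Proof. by rewrite /adj map_delta_mx trmx_delta. Qed.

Lemma adjmx1 n : adj (1%:M : 'M[C]_n) = 1%:M.
Proof. by rewrite /adj map_mx1 trmx1. Qed.

Lemma adjmxM m n p (A : 'M[C]_(m, n)) (B : 'M[C]_(n, p)) : adj (A *m B) = adj B *m adj A.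
Proof. by rewrite /adj map_mxM trmx_mul. Qed.

Definition braket n (a b : 'cV[C]_n) : C := (adj a *m b) 0 0.

Lemma braketDl n (a b e : 'cV[C]_n) : braket (a + b) e = braket a e + braket b e.
Proof. by rewrite /braket adjmxD mulmxDl mxE. Qed.

Lemma braketDr n (a b e : 'cV[C]_n) : braket e (a + b) = braket e a + braket e b.
Proof. by rewrite /braket mulmxDr mxE. Qed.

Lemma braketNl n (a e : 'cV[C]_n) : braket (- a) e = - braket a e.
Proof. by rewrite /braket adjmxN mulNmx mxE. Qed.

Lemma braketNr n (a e : 'cV[C]_n) : braket e (- a) = - braket e a.
Proof. by rewrite /braket mulmxN mxE. Qed.

Lemma braketZl n x (a e : 'cV[C]_n) : braket (x *: a) e = x^* * braket a e.
Proof. by rewrite /braket adjmxZ -scalemxAl mxE. Qed.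

Lemma braketZr n x (a e : 'cV[C]_n) : braket e (x *: a) = x * braket e a.
Proof. by rewrite /braket -scalemxAr mxE. Qed.

Lemma braketC n (a b : 'cV[C]_n) : braket b a = (braket a b)^*.
Proof.
rewrite /braket !mxE rmorph_sum; apply: eq_bigr => i _.
by rewrite !mxE rmorphM /= conjCK mulrC.
Qed.

Lemma braket_self_ge0 n (a : 'cV[C]_n) : 0 <= braket a a.
Proof. by rewrite /braket mxE sumr_ge0 // => i _; rewrite !mxE mulrC mul_conjC_ge0. Qed.

Lemma braket_self_eq0 n (a : 'cV[C]_n) : braket a a = 0 -> a = 0.
Proof.
have term_ge0 (k : 'I_n) : true -> 0 <= adj a 0 k * a k 0.
  by move=> _; rewrite !mxE mulrC mul_conjC_ge0.
rewrite /braket mxE => /psumr_eq0P a0; apply/matrixP => i j.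
have /eqP := a0 term_ge0 i isT; rewrite !mxE mulrC mul_conjC_eq0.
by rewrite (ord1 j) => /eqP.
Qed.

End Adjoint.

Section Tensor.
Variable R : realType.
Local Notation C := (R[i]).
Variable d : nat.
Local Notation PA := (PA R d).

Definition tensv (a b : 'cV[C]_d) : 'cV[C]_(d * d) := (mxvec (a *m b^T))^T.

Lemma tensvE a b i j : tensv a b (mxvec_index i j) 0 = a i 0 * b j 0.
Proof. by rewrite mxE mxvecE mxE big_ord1 mxE. Qed.

Lemma tensv_sum_delta a b :
  tensv a b = \sum_i \sum_j (a i 0 * b j 0) *: delta_mx (mxvec_index i j) 0.
Proof.
rewrite {1}[tensv a b]matrix_sum_delta sum_mxvec_index.
by apply: eq_bigr => i _; apply: eq_bigr => j _; rewrite big_ord1 tensvE.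
Qed.

Lemma tensvDr a b e : tensv a (b + e) = tensv a b + tensv a e.
Proof. by rewrite /tensv linearD mulmxDr !linearD. Qed.

Lemma tensvZr a x b : tensv a (x *: b) = x *: tensv a b.
Proof. by rewrite /tensv linearZ -scalemxAr !linearZ. Qed.

Lemma braket_tensv a b c e :
  braket (tensv a b) (tensv c e) = braket a c * braket b e.
Proof.
rewrite /braket !mxE sum_mxvec_index big_distrlr /=.
apply: eq_bigr => i _; apply: eq_bigr => j _.
by rewrite !mxE !mxvecE !mxE !big_ord1 !mxE rmorphM mulrACA.
Qed.

Lemma swap_delta k l :
  swap_op R d *m delta_mx (mxvec_index k l) 0 =
  delta_mx (mxvec_index l k) 0 :> 'cV[C]_(d * d).
Proof.
rewrite /swap_op mulmx_suml (bigD1 k) //= mulmx_suml (bigD1 l) //= mul_delta_mx.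
rewrite [X in _ + X + _]big1 => [|j ne_jl]; last first.
  by rewrite mul_delta_mx_0 // mxvec_index_eq negb_and ne_jl orbT.
rewrite [X in _ + X]big1 ?addr0 // => i ne_ik; rewrite mulmx_suml big1 // => j _.
by rewrite mul_delta_mx_0 // mxvec_index_eq negb_and ne_ik.
Qed.

Lemma swap_tensv a b : swap_op R d *m tensv a b = tensv b a.
Proof.
rewrite !tensv_sum_delta mulmx_sumr exchange_big; apply: eq_bigr => j _.
rewrite mulmx_sumr; apply: eq_bigr => i _.
by rewrite -scalemxAr swap_delta mulrC.
Qed.

Lemma adjmx_swap : adj (swap_op R d) = swap_op R d.
Proof.
rewrite /swap_op adjmx_sum exchange_big; apply: eq_bigr => i _.
by rewrite adjmx_sum; apply: eq_bigr => j _; rewrite adjmx_delta.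
Qed.

Lemma adjmx_PA : adj PA = PA.
Proof. by rewrite /PA adjmxZ adjmxD adjmxN adjmx1 adjmx_swap fmorphV rmorph_nat. Qed.

Lemma PA_tensv a b : PA *m tensv a b = 2^-1 *: (tensv a b - tensv b a).
Proof. by rewrite /PA -scalemxAl mulmxBl mul1mx swap_tensv. Qed.

Lemma PA_tensv_diag a : PA *m tensv a a = 0 :> 'cV[C]_(d * d).
Proof. by rewrite PA_tensv subrr scaler0. Qed.

Lemma tens_ketbra a b : tens (ketbra a) (ketbra b) = tensv a b *m adj (tensv a b).
Proof.
rewrite tensv_sum_delta [in RHS]adjmx_sum mulmx_suml /tens; apply: eq_bigr => i _.
rewrite mulmx_suml; apply: eq_bigr => j _.
rewrite mulmx_sumr; apply: eq_bigr => k _.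
rewrite [in RHS]adjmx_sum mulmx_sumr; apply: eq_bigr => l _.
rewrite adjmxZ adjmx_delta -scalemxAl -scalemxAr mul_delta_mx scalerA !mxE !big_ord1 !mxE.
by rewrite rmorphM mulrACA.
Qed.

Lemma trPA_tens a b : \tr (PA *m tens (ketbra a) (ketbra b)) =
  2^-1 * (braket a a * braket b b - `|braket a b| ^+ 2).
Proof.
rewrite tens_ketbra mulmxA mxtrace_mulC /mxtrace big_ord1 PA_tensv.
rewrite -/(braket _ _) braketZr braketDr braketNr !braket_tensv.
by rewrite normCK -braketC.
Qed.

Lemma PA_tens_PA a b : PA *m tens (ketbra a) (ketbra b) *m PA =
  (PA *m tensv a b) *m adj (PA *m tensv a b).
Proof. by rewrite tens_ketbra adjmxM adjmx_PA !mulmxA. Qed.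

End Tensor.

Section AntisymmetricPart.
Variable R : realType.
Local Notation C := (R[i]).
Variable d : nat.
Local Notation PA := (PA R d).
Implicit Types a b u w : 'cV[C]_d.

Definition perp_part a b := b - braket a b *: a.

Lemma braket_perp_part a b : unit_vec a -> braket a (perp_part a b) = 0.
Proof.
by move=> ua; rewrite braketDr braketNr braketZr (ua : braket a a = 1) mulr1 subrr.
Qed.

Lemma braket_perp_part_self a b : unit_vec a -> unit_vec b ->
  braket (perp_part a b) (perp_part a b) = 1 - `|braket a b| ^+ 2.
Proof.
move=> ua ub; rewrite braketDl braketNl braketZl braket_perp_part // mulr0 subr0.
by rewrite braketDr braketNr braketZr (ub : braket b b = 1) normCK -braketC.
Qed.

Lemma PA_tensv_perp_part a b : PA *m tensv a (perp_part a b) = PA *m tensv a b.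
Proof.
rewrite /perp_part -scaleNr tensvDr mulmxDr tensvZr -scalemxAr PA_tensv_diag.
by rewrite scaler0 addr0.
Qed.

Lemma unit_braket_sqr_le1 a b : unit_vec a -> unit_vec b -> `|braket a b| ^+ 2 <= 1.
Proof. by move=> ua ub; rewrite -subr_ge0 -braket_perp_part_self // braket_self_ge0. Qed.

Lemma trPA_tens_unit a b : unit_vec a -> unit_vec b ->
  \tr (PA *m tens (ketbra a) (ketbra b)) = 2^-1 * (1 - `|braket a b| ^+ 2).
Proof.
by move=> ua ub; rewrite trPA_tens (ua : braket a a = 1) (ub : braket b b = 1) mul1r.
Qed.

Lemma exists_unit_direction u w : unit_vec u ->
  exists2 g, unit_vec g & w = sqrtC (braket w w) *: g.
Proof.
move=> uu; have [w0|w_neq0] := eqVneq w 0.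
  by exists u => //; rewrite w0 /braket mulmx0 mxE sqrtC0 scale0r.
set s := sqrtC _; have s_neq0 : s != 0.
  by rewrite sqrtC_eq0; apply: contra w_neq0 => /eqP/braket_self_eq0 ->.
have s_conj : s^-1^* = s^-1 by rewrite geC0_conj // invr_ge0 sqrtC_ge0 braket_self_ge0.
exists (s^-1 *: w); last by rewrite scalerA divff ?scale1r.
rewrite /unit_vec -/(braket _ _) braketZl braketZr s_conj mulrA -[braket w w]sqrtCK -/s.
by field.
Qed.

(* The last conjunct is multiplied by [lambda]: when [lambda = 0], i.e. [b] is
   parallel to [a], the unit vector [g] is arbitrary. *)
Lemma antisym_reduction a b : unit_vec a -> unit_vec b ->
  let lambda := 1 - `|braket a b| ^+ 2 in
  exists g, [/\ unit_vec g,
    PA *m tens (ketbra a) (ketbra b) *m PA =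
      lambda *: (PA *m tens (ketbra a) (ketbra g) *m PA) &
    lambda * \tr (PA *m tens (ketbra a) (ketbra g)) = 2^-1 * lambda].
Proof.
move=> ua ub lambda; have [g ug w_g] := exists_unit_direction (perp_part a b) ub.
set s := sqrtC _ in w_g.
have norm_s : `|s| ^+ 2 = lambda.
  by rewrite ger0_norm ?sqrtC_ge0 ?braket_self_ge0 // sqrtCK braket_perp_part_self.
exists g; split=> //.
  rewrite !PA_tens_PA -PA_tensv_perp_part w_g tensvZr -scalemxAr adjmxZ.
  by rewrite -scalemxAr -scalemxAl scalerA -normCKC norm_s.
have ag0 : lambda * `|braket a g| ^+ 2 = 0.
  by rewrite -norm_s -exprMn -normrM -braketZr -w_g braket_perp_part // normr0 expr0n.
by rewrite (trPA_tens_unit ua ug) mulrCA mulrBr mulr1 ag0 subr0.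
Qed.

End AntisymmetricPart.

Section Mixtures.
Variables (K : fieldType) (m n : nat) (P : 'M[K]_m) (c : K).
Variables (q lam : 'I_n -> K) (X Y : 'I_n -> 'M[K]_m).
Hypothesis trPX : forall k, \tr (P *m X k) = c * lam k.
Hypothesis PXP : forall k, P *m X k *m P = lam k *: (P *m Y k *m P).
Hypothesis lam_trPY : forall k, lam k * \tr (P *m Y k) = c * lam k.
Local Notation N := (\sum_k q k * lam k).
Local Notation rho := (\sum_k q k *: X k).
Local Notation rho' := (\sum_k (q k * lam k / N) *: Y k).

Lemma mxtrace_mixture : \tr (P *m rho) = c * N.
Proof.
rewrite mxtrace_mulmx_sum mulr_sumr; apply: eq_bigr => k _.
by rewrite trPX mulrCA.
Qed.

Hypothesis N_neq0 : N != 0.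

Lemma mxtrace_rescaled_mixture : \tr (P *m rho') = c.
Proof.
rewrite mxtrace_mulmx_sum (eq_bigr (fun k => c * (q k * lam k) / N)).
  by rewrite -mulr_suml -mulr_sumr mulfK.
by move=> k _; rewrite mulrCA -lam_trPY mulrAC -[q k * _ * _]mulrA.
Qed.

Lemma compress_rescaled_mixture :
  (\tr (P *m rho))^-1 *: (P *m rho *m P) = (\tr (P *m rho'))^-1 *: (P *m rho' *m P).
Proof.
rewrite mxtrace_mixture mxtrace_rescaled_mixture !mulmx_sum_mulmx !scaler_sumr.
apply: eq_bigr => k _; rewrite PXP !scalerA; congr (_ *: _).
by rewrite invfM; ring.
Qed.

End Mixtures.

Theorem lemma1 (R : realType) (d : nat) (rho : 'M[R[i]]_(d * d)) :
  separable rho ->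
  0 < \tr (PA R d *m rho) ->
  exists rho' : 'M[R[i]]_(d * d),
    [/\ separable rho',
        \tr (PA R d *m rho') = 2^-1 &
        (\tr (PA R d *m rho))^-1 *: (PA R d *m rho *m PA R d) =
        (\tr (PA R d *m rho'))^-1 *: (PA R d *m rho' *m PA R d)].
Proof.
move=> [n [q [a [b [q_ge0 q_sum ua ub ->]]]]] trPA_gt0.
pose lam k := 1 - `|braket (a k) (b k)| ^+ 2.
have /fin_all_exists [g /all_and3 [ug PXP lam_trPY]] k :=
  antisym_reduction (ua k) (ub k).
have trPX k := trPA_tens_unit (ua k) (ub k).
have N_gt0 : 0 < \sum_k q k * lam k.
  by move: trPA_gt0; rewrite (mxtrace_mixture q trPX) pmulr_rgt0 // invr_gt0 ltr0n.
have N_neq0 : \sum_k q k * lam k != 0 by rewrite gt_eqF.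
set N := \sum_k q k * lam k in N_gt0 N_neq0.
exists (\sum_k (q k * lam k / N) *: tens (ketbra (a k)) (ketbra (g k))); split.
- exists n, (fun k => q k * lam k / N), a, g.
  split=> [k||//|//|//]; last by rewrite -mulr_suml divff.
  apply: divr_ge0; last exact: ltW.
  by rewrite mulr_ge0 ?subr_ge0 ?unit_braket_sqr_le1.
- exact: mxtrace_rescaled_mixture lam_trPY N_neq0.
- exact: compress_rescaled_mixture trPX PXP lam_trPY N_neq0.
Qed.
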